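(* Let $s\in\{0,1\}^n$, $p\in[0,1)$, $x\in\{0,1\}^k$ with $k\ge2$, and $i\in\{1,\dots,n-k+1\}$. Then $$K_{s,x}[i]=\frac{1}{(1-p)^k}\left(P_{s,x}[i]-\sum_{\ell=k+1}^{n}\sum_{y\in Y_\ell(x)}(-1)^{|y|-|x|+1}P_{s,y}[i]\binom{y}{x}'\left(\frac{p}{1-p}\right)^{\ell-k}\right).$$
   Context: Deletion channel: a trace $\tilde S$ of $s$ is obtained by deleting each bit of $s$ independently with probability $p$. Strings are indexed from 1, $s[a:b]=(s[a],\dots,s[b])$, and for a string $z$, $z[2:-2]$ denotes $z$ with its first and last symbols removed. For strings $y,z$, $\binom{y}{z}$ denotes the number of ways to delete $|y|-|z|$ symbols of $y$ to obtain $z$ (i.e., the number of index sets at which $z$ occurs as a subsequence of $y$), and $\binom{y}{z}'=\binom{y[2:-2]}{z[2:-2]}$. For a string $x$ of length $k$ and $\ell\ge k$, $Y_\ell(x)$ is the set of binary strings $y$ of length $\ell$ that are supersequences of $x$ with $y[1]=x[1]$ and $y[\ell]=x[k]$. For any binary string $x$ of length $m$, $K_{s,x}[i]=\sum_{j\ge i}\binom{j-1}{i-1}(1-p)^{i-1}p^{j-i}\mathbb 1\{s[j:j+m-1]=x\}$ (terms with $j+m-1>n$ are zero), and $P_{s,x}[i]=\Pr(\tilde S[i:i+m-1]=x)$ (zero if the trace is shorter than $i+m-1$). *)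

(* Binary strings are [seq bool], indexed from 1 in the
   paper; we translate the 1-indexed window s[a:a+m-1] as
   take m (drop a.-1 s). *)
From mathcomp Require Import all_boot all_order all_algebra.
Set Implicit Arguments. Unset Strict Implicit. Unset Printing Implicit Defensive.
Import GRing.Theory Num.Theory.
Local Open Scope ring_scope.

Definition occurs_at (s x : seq bool) (a : nat) : bool :=
  [&& (0 < a)%N, (a + size x <= size s + 1)%N & take (size x) (drop a.-1 s) == x].

(* Deletion channel: a keep-mask d (d_j = true iff bit j survives) has
   probability (1-p)^{#kept} p^{#deleted}; the trace is mask d s. *)
Definition mask_weight (R : nzRingType) (p : R) (n : nat) (d : seq bool) : R :=
  (1 - p) ^+ count id d * p ^+ (n - count id d).

Definition Ptrace (R : nzRingType) (p : R) (s x : seq bool) (i : nat) : R :=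
  \sum_(d : (size s).-tuple bool)
     mask_weight p (size s) d * (occurs_at (mask d s) x i)%:R.

Definition Kstat (R : nzRingType) (p : R) (s x : seq bool) (i : nat) : R :=
  \sum_(i <= j < (size s).+1)
     ('C(j.-1, i.-1))%:R * (1 - p) ^+ i.-1 * p ^+ (j - i) * (occurs_at s x j)%:R.

Definition sbinom (y z : seq bool) : nat :=
  #|[pred m : (size y).-tuple bool | mask m y == z]|.

Definition strip (z : seq bool) : seq bool := take (size z).-2 (drop 1 z).

Definition sbinom' (y z : seq bool) : nat := sbinom (strip y) (strip z).

(* Membership in Y_l(x) for y of length l: supersequence of x, same first and last symbol. *)
Definition inY (x y : seq bool) : bool :=
  [&& subseq x y, head false y == head false x & last false y == last false x].

(* Both sides obey the same recursion in the first bit [b] of [s]: for i >= 2,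
   K_{b::s}[i] = p K_s[i] + (1-p) K_s[i-1], and the statistic whose trace expectation
   is the bracket (each P_{s,y}[i] replaced by the indicator of y at position i of the
   trace) does not look at the first trace symbol.  For i = 1 that statistic, on a
   trace [b :: t], is [b = x_1] times an alternating sum over the prefixes of [t]; this
   sum solves A(c :: t, z) = - p/(1-p) A(t, z) + [c = z_1] A(t, behead z), A(t, [::]) = 1,
   and that recursion forces the trace expectation of A(., z) on [s] to be
   (1-p)^|z| [z is a prefix of s], matching the new term [x occurs at 1 in b :: s]. *)

From mathcomp Require Import all_boot all_order all_algebra ring zify.
Import GRing.Theory Num.Theory.
Local Open Scope ring_scope.

Lemma big_tuple_cons {R : nmodType} {T : finType} {n : nat} (F : seq T -> R) :
  \sum_(d : n.+1.-tuple T) F d = \sum_(b : T) \sum_(d : n.-tuple T) F (b :: d).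
Proof.
rewrite (pair_big xpredT xpredT (fun b (d : n.-tuple T) => F (b :: d))) /=.
rewrite (reindex (fun bd : T * n.-tuple T => [tuple of bd.1 :: bd.2])) //=.
apply: onW_bij; exists (fun d : n.+1.-tuple T => (thead d, [tuple of behead d])).
  by case=> b d; congr pair; apply: val_inj.
by move=> d; apply: val_inj; rewrite /= [in RHS](tuple_eta d).
Qed.

Lemma big_tuple_eq {R : nzSemiRingType} {T : finType} {l : nat} (P : pred (seq T))
    (F : seq T -> R) (w : seq T) :
  \sum_(y : l.-tuple T | P y) (w == y)%:R * F y = ((size w == l) && P w)%:R * F w.
Proof.
have [w_l|] := eqVneq (size w) l; last first.
  move=> w_l; rewrite mul0r big1 // => y _; case: eqP => [w_y|]; last by rewrite mul0r.
  by move: w_l; rewrite w_y size_tuple eqxx.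
have [Pw|nPw] /= := boolP (P w); last first.
  rewrite mul0r big1 // => y Py; case: eqP => [w_y|]; last by rewrite mul0r.
  by move: nPw; rewrite w_y Py.
rewrite (bigD1 (Tuple (introT eqP w_l))) //= eqxx mul1r big1 ?addr0 // => y /andP[_ yw].
by case: eqP => [w_y|]; rewrite ?mul0r //; case/eqP: yw; apply: val_inj.
Qed.

Lemma sbinomE {R : nzSemiRingType} (v u : seq bool) :
  (sbinom v u)%:R = \sum_(m : (size v).-tuple bool) ((mask m v == u)%:R : R).
Proof.
rewrite /sbinom -sum1_card natr_sum big_mkcond /=; apply: eq_bigr => m _.
by rewrite inE; case: eqP.
Qed.

Lemma sbinom_eq0 (v u : seq bool) : ~~ subseq u v -> sbinom v u = 0%N.
Proof.
move=> u_notin_v; apply: eq_card0 => m; rewrite !inE; apply/negbTE/eqP => m_u.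
by rewrite -m_u mask_subseq in u_notin_v.
Qed.

Lemma sbinom_small (v u : seq bool) : (size v < size u)%N -> sbinom v u = 0%N.
Proof.
by move=> lt_vu; apply/sbinom_eq0/negP => /size_subseq; rewrite leqNgt lt_vu.
Qed.

Lemma sbinom_cons {R : nzSemiRingType} (c : bool) (v u : seq bool) :
  ((sbinom (c :: v) u)%:R : R) = (sbinom v u)%:R +
    (if u is c' :: u' then (c == c')%:R * (sbinom v u')%:R else 0).
Proof.
rewrite !sbinomE (big_tuple_cons (fun m => ((mask m (c :: v) == u)%:R : R))).
rewrite big_bool /= addrC; congr (_ + _); case: u => [|c' u']; first by rewrite big1.
rewrite sbinomE mulr_sumr; apply: eq_bigr => m _.
by rewrite eqseq_cons; case: (c == c'); rewrite ?mul1r ?mul0r.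
Qed.

Lemma sbinom_eqsize {R : nzSemiRingType} (v u : seq bool) :
  size v = size u -> ((sbinom v u)%:R : R) = (v == u)%:R.
Proof.
elim: v u => [|c v IH] [|c' u] //= => [_|[size_vu]].
  rewrite sbinomE (big_pred1 [tuple]) // => m; apply/esym/eqP; exact: tuple0.
rewrite sbinom_cons sbinom_small ?size_vu // add0r IH // eqseq_cons.
by case: (c == c'); rewrite ?mul1r ?mul0r.
Qed.

Lemma sbinom_nil {R : nzSemiRingType} (v : seq bool) : ((sbinom v [::])%:R : R) = 1.
Proof.
by elim: v => [|c v IH]; [rewrite sbinom_eqsize | rewrite sbinom_cons IH addr0].
Qed.

Section TraceExpectation.
Context {R : comNzRingType} (p : R).

Definition trace_expect (s : seq bool) (f : seq bool -> R) : R :=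
  \sum_(d : (size s).-tuple bool) mask_weight p (size s) d * f (mask d s).

Lemma PtraceE (s y : seq bool) (i : nat) :
  Ptrace p s y i = trace_expect s (fun t => (occurs_at t y i)%:R).
Proof. by []. Qed.

Lemma trace_expect_nil (f : seq bool -> R) : trace_expect [::] f = f [::].
Proof.
rewrite /trace_expect (big_pred1 [tuple]) => [|d]; last by apply/esym/eqP/tuple0.
by rewrite /mask_weight !expr0 !mul1r.
Qed.

Lemma trace_expect_cons (b : bool) (s : seq bool) (f : seq bool -> R) :
  trace_expect (b :: s) f =
    p * trace_expect s f + (1 - p) * trace_expect s (fun t => f (b :: t)).
Proof.
rewrite /trace_expect.
rewrite (big_tuple_cons (fun d => mask_weight p (size s).+1 d * f (mask d (b :: s)))) big_bool.
rewrite [RHS]addrC !mulr_sumr -!big_split /=; apply: eq_bigr => d _.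
have le_ds : (count id d <= size s)%N by rewrite -[leqRHS](size_tuple d) count_size.
by rewrite /mask_weight /= add0n subSS subSn // !exprS; ring.
Qed.

Lemma eq_in_trace_expect (s : seq bool) {f g : seq bool -> R} :
  (forall t, (size t <= size s)%N -> f t = g t) -> trace_expect s f = trace_expect s g.
Proof.
move=> eq_fg; apply: eq_bigr => d _; congr (_ * _); apply: eq_fg.
by rewrite size_mask ?size_tuple // -[leqRHS](size_tuple d) count_size.
Qed.

Lemma eq_trace_expect (s : seq bool) {f g : seq bool -> R} :
  f =1 g -> trace_expect s f = trace_expect s g.
Proof. by move=> eq_fg; apply: eq_in_trace_expect => t _. Qed.

Lemma trace_expect1 (s : seq bool) : trace_expect s (fun=> 1) = 1.
Proof.
by elim: s => [|b s IH]; rewrite ?trace_expect_nil // trace_expect_cons IH !mulr1 addrC subrK.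
Qed.

Lemma trace_expect_sum (I : Type) (r : seq I) (P : pred I) (s : seq bool)
    (F : I -> seq bool -> R) :
  \sum_(j <- r | P j) trace_expect s (F j) =
    trace_expect s (fun t => \sum_(j <- r | P j) F j t).
Proof. by rewrite exchange_big; apply: eq_bigr => d _; rewrite mulr_sumr. Qed.

Lemma trace_expectD (s : seq bool) (f g : seq bool -> R) :
  trace_expect s (fun t => f t + g t) = trace_expect s f + trace_expect s g.
Proof. by rewrite -big_split; apply: eq_bigr => d _; rewrite mulrDr. Qed.

Lemma trace_expectB (s : seq bool) (f g : seq bool -> R) :
  trace_expect s (fun t => f t - g t) = trace_expect s f - trace_expect s g.
Proof. by rewrite -sumrB; apply: eq_bigr => d _; rewrite mulrBr. Qed.

Lemma trace_expectMl (a : R) (s : seq bool) (f : seq bool -> R) :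
  trace_expect s (fun t => a * f t) = a * trace_expect s f.
Proof. by rewrite mulr_sumr; apply: eq_bigr => d _; rewrite mulrCA. Qed.

Lemma trace_expectMr (a : R) (s : seq bool) (f : seq bool -> R) :
  trace_expect s (fun t => f t * a) = trace_expect s f * a.
Proof. by rewrite mulr_suml; apply: eq_bigr => d _; rewrite mulrA. Qed.

End TraceExpectation.

Lemma occurs_at0 (s x : seq bool) : occurs_at s x 0 = false.
Proof. by []. Qed.

Lemma occurs_atSS (b : bool) (s x : seq bool) (j : nat) :
  occurs_at (b :: s) x j.+2 = occurs_at s x j.+1.
Proof. by rewrite /occurs_at /= !addSn. Qed.

Lemma occurs_at1 (s x : seq bool) : occurs_at s x 1 = (take (size x) s == x).
Proof.
rewrite /occurs_at /= drop0; case: eqP => [take_sx|]; last by rewrite andbF.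
by rewrite andbT -take_sx size_take; case: ltnP; lia.
Qed.

Lemma occurs_at_nil (x : seq bool) (i : nat) : x != [::] -> occurs_at [::] x i = false.
Proof.
by case: x => // c x _; rewrite /occurs_at; case: i => // i; rewrite addSn ltnS /= addnS.
Qed.

Section KstatRecursion.
Context {R : comNzRingType} (p : R).

Definition Kterm (s x : seq bool) (i j : nat) : R :=
  ('C(j.-1, i.-1))%:R * (1 - p) ^+ i.-1 * p ^+ (j - i) * (occurs_at s x j)%:R.

Lemma Kstat_ord (s x : seq bool) (i : nat) : (1 <= i)%N ->
  Kstat p s x i = \sum_(j < (size s).+1) Kterm s x i j.
Proof.
move=> i_gt0; rewrite /Kstat big_geq_mkord big_mkcond; apply: eq_bigr => j _.
case: leqP => // lt_ji; rewrite /Kterm; case: (nat_of_ord j) lt_ji => [|j'] lt_ji.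
  by rewrite occurs_at0 mulr0.
by rewrite bin_small ?mul0r //; lia.
Qed.

Lemma Kstat_cons1 (b : bool) (s x : seq bool) :
  Kstat p (b :: s) x 1 = (occurs_at (b :: s) x 1)%:R + p * Kstat p s x 1.
Proof.
rewrite !Kstat_ord // [size _]/= !big_ord_recl /Kterm !occurs_at0 !mulr0 !add0r mulr_sumr.
congr (_ + _); first by rewrite !expr0 !mul1r.
apply: eq_bigr => j _; rewrite !lift0 occurs_atSS !bin0 !subn1 /= !expr0 exprS; ring.
Qed.

Lemma Kstat_consS (b : bool) (s x : seq bool) (i : nat) :
  Kstat p (b :: s) x i.+2 = p * Kstat p s x i.+2 + (1 - p) * Kstat p s x i.+1.
Proof.
rewrite !Kstat_ord // [size _]/= !big_ord_recl /Kterm !occurs_at0 !mulr0 !add0r.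
rewrite lift0 bin_small // !mul0r add0r !mulr_sumr -big_split; apply: eq_bigr => j _.
rewrite !lift0 occurs_atSS /= binS natrD !subSS.
have [le_ji|lt_ij] := leqP j i.
  by rewrite (@bin_small j i.+1) ?ltnS // add0r !exprS; ring.
by rewrite (_ : (j - i = (j - i.+1).+1)%N); [rewrite !exprS; ring | lia].
Qed.

End KstatRecursion.

Definition init {T : Type} (w : seq T) : seq T := take (size w).-1 w.

Lemma init_cons {T : eqType} (b : T) (w : seq T) : w != [::] -> init (b :: w) = b :: init w.
Proof. by case: w. Qed.

Lemma size_init {T : Type} (w : seq T) : size (init w) = (size w).-1.
Proof. by rewrite size_takel // leq_pred. Qed.

Lemma rcons_init {T : eqType} (x0 : T) (w : seq T) :
  w != [::] -> w = rcons (init w) (last x0 w).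
Proof.
rewrite -size_eq0 -lt0n => w_gt0.
by rewrite /init -nth_last -take_nth ?prednK ?take_size // ltn_predL.
Qed.

Lemma last_default {T : eqType} (x0 x1 : T) (w : seq T) :
  w != [::] -> last x0 w = last x1 w.
Proof. by case: w. Qed.

Section PrefixEstimator.
Context {R : fieldType} (p : R).

Definition odds : R := p / (1 - p).

Fixpoint prefix_estimator (t z : seq bool) : R :=
  match t, z with
  | [::], _ => (z == [::])%:R
  | _ :: _, [::] => 1
  | b :: t', c :: z' =>
      - odds * prefix_estimator t' z + (b == c)%:R * prefix_estimator t' z'
  end.

Lemma prefix_estimator_nil (t : seq bool) : prefix_estimator t [::] = 1.
Proof. by case: t. Qed.

(* The guard [m <= size t] lets sums of these terms run over any range past [size t]. *)
Definition prefix_term (t z : seq bool) (m : nat) : R :=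
  (m <= size t)%:R * (- odds) ^+ (m - size z)
  * (last false (take m t) == last false z)%:R * (sbinom (init (take m t)) (init z))%:R.

Lemma prefix_term_out (t z : seq bool) (m : nat) :
  (size t < m)%N -> prefix_term t z m = 0.
Proof. by rewrite /prefix_term ltnNge => /negbTE->; rewrite !mul0r. Qed.

Lemma prefix_term_small (t z : seq bool) (m : nat) :
  (1 <= m < size z)%N -> prefix_term t z m = 0.
Proof.
move=> /andP[m_gt0 lt_mz]; rewrite /prefix_term sbinom_small ?mulr0 //.
by rewrite !size_init size_take -!subn1; case: (ltnP m (size t)) => ?; lia.
Qed.

Lemma prefix_term_size (t z : seq bool) :
  z != [::] -> prefix_term t z (size z) = (take (size z) t == z)%:R.
Proof.
move=> z_nil; have [lt_tz|le_zt] := ltnP (size t) (size z).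
  rewrite prefix_term_out //; case: eqP => // take_tz.
  by move: lt_tz; rewrite -take_tz size_take; case: (ltnP (size z) (size t)) => ?; lia.
have size_w : size (take (size z) t) = size z by rewrite size_takel.
have w_nil : take (size z) t != [::] by rewrite -size_eq0 size_w size_eq0.
rewrite /prefix_term le_zt subnn expr0 !mul1r sbinom_eqsize ?size_init ?size_w //.
set w := take (size z) t in w_nil *; rewrite -natrM mulnb.
rewrite [w in RHS](rcons_init false _ w_nil) [z in RHS](rcons_init false _ z_nil).
by rewrite eqseq_rcons andbC.
Qed.

Lemma prefix_term_cons1 (b c : bool) (t : seq bool) :
  prefix_term (b :: t) [:: c] 1 = (b == c)%:R.
Proof. by rewrite /prefix_term /= take0 sbinom_nil mulr1 !mul1r. Qed.

Lemma prefix_term_consS (b c : bool) (t z : seq bool) (m : nat) : (1 <= m)%N ->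
  prefix_term (b :: t) (c :: z) m.+1 =
    - odds * prefix_term t (c :: z) m + (z != [::])%:R * (b == c)%:R * prefix_term t z m.
Proof.
move=> m_gt0; rewrite /prefix_term /= ltnS subSS.
have [le_mt|] := leqP m (size t); last by rewrite !mul0r !mulr0 addr0.
have w_nil : take m t != [::] by rewrite -size_eq0 size_takel //; lia.
rewrite (last_default b false _ w_nil) init_cons //.
have [->|z_nil] := eqVneq z [::].
  rewrite /= !sbinom_nil subn1 subn0 !mul0r addr0 !mulr1 !mul1r.
  by rewrite mulrA -exprS prednK.
rewrite (last_default c false _ z_nil) init_cons // sbinom_cons /= !mulr1n !mul1r.
have [le_mz|lt_zm] := leqP m (size z).
  rewrite (sbinom_small (init (take m t)) (c :: init z)) ?mulr0 ?add0r ?mul0r; first by ring.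
  by rewrite /= !size_init size_takel // -!subn1; lia.
rewrite (_ : (m - size z = (m - (size z).+1).+1)%N) ?exprS; [ring | lia].
Qed.

Lemma prefix_estimatorE (t z : seq bool) (N : nat) : z != [::] -> (size t < N)%N ->
  prefix_estimator t z = \sum_(size z <= m < N) prefix_term t z m.
Proof.
elim: t z N => [|b t IH] [|c z] N // _.
  rewrite big_nat_cond big1 // => m /andP[/andP[lt_zm _] _].
  by apply: prefix_term_out; apply: leq_trans lt_zm.
case: N => // N; rewrite ltnS => lt_tN; rewrite [size _]/= big_add1 /=.
have [->|z_nil] := eqVneq z [::].
  rewrite big_ltn ?(leq_ltn_trans (leq0n _) lt_tN) // prefix_term_cons1.
  rewrite prefix_estimator_nil mulr1 addrC (IH [:: c] N) // mulr_sumr; congr (_ + _).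
  by apply: eq_big_nat => m /andP[m_gt0 _]; rewrite prefix_term_consS // eqxx !mul0r addr0.
rewrite (IH (c :: z) N) // (IH z N) //.
rewrite [RHS](eq_big_nat _ _ (F2 := fun m => - odds * prefix_term t (c :: z) m
  + (b == c)%:R * prefix_term t z m)); last first.
  move=> m /andP[le_zm _]; rewrite prefix_term_consS ?z_nil ?mul1r //.
  by apply: leq_trans le_zm; rewrite lt0n size_eq0.
rewrite big_split /= -!mulr_sumr; congr (_ * _ + _).
have [lt_zN|le_Nz] := ltnP (size z) N; last by rewrite !big_geq ?(leqW le_Nz).
by rewrite [in RHS]big_ltn // prefix_term_small ?add0r // ltnSn lt0n size_eq0 z_nil.
Qed.

Hypothesis q_neq0 : 1 - p != 0.

Lemma trace_expect_prefix_estimator (s z : seq bool) :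
  trace_expect p s (prefix_estimator^~ z) = (1 - p) ^+ size z * (take (size z) s == z)%:R.
Proof.
elim: s z => [|b s IH] z.
  by rewrite trace_expect_nil; case: z => [|c z]; rewrite /= ?expr0 ?mulr1 ?mulr0.
case: z => [|c z].
  rewrite expr0 mul1r -(trace_expect1 p (b :: s)).
  by apply: eq_trace_expect => t; apply: prefix_estimator_nil.
rewrite trace_expect_cons /= trace_expectD !trace_expectMl !IH /= eqseq_cons /odds.
by case: (b == c); case: (take _ s == z); rewrite /= ?mul1r ?mul0r ?mulr0 ?addr0 exprS; field.
Qed.

End PrefixEstimator.

Lemma inY_sbinom'_cons (a b : bool) (x v : seq bool) : x != [::] -> v != [::] ->
  (inY (a :: x) (b :: v) * sbinom' (b :: v) (a :: x))%N =
    ((b == a) * (last false v == last false x) * sbinom (init v) (init x))%N.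
Proof.
move=> x_nil v_nil; rewrite /sbinom' /strip /= !drop0 -/(init v) -/(init x).
have [sub_xv|] := boolP (subseq (init x) (init v)); last by move/sbinom_eq0->; rewrite !muln0.
rewrite /inY /= (last_default b false _ v_nil) (last_default a false _ x_nil).
have [last_vx|] := eqVneq (last false v) (last false x); last by rewrite !andbF /= muln0.
have sub_xv' : subseq x v.
  by rewrite (rcons_init false _ x_nil) (rcons_init false _ v_nil) last_vx -!cats1 cat_subseq.
by case: a b => [] []; rewrite ?eqxx /= ?sub_xv' ?andbF.
Qed.

Section KEstimator.
Context {R : fieldType} (p : R).

(* The bracket of the theorem with each P_{s,y}[i] replaced by the indicator that
   [y] occurs at position [i] of a trace [t]; [N] stands for [n]. *)
Definition K_estimator (N : nat) (x : seq bool) (i : nat) (t : seq bool) : R :=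
  (occurs_at t x i)%:R -
  \sum_((size x).+1 <= l < N.+1)
    \sum_(y : l.-tuple bool | inY x y)
      (-1) ^+ (l - size x + 1) * (occurs_at t y i)%:R * (sbinom' y x)%:R
        * odds p ^+ (l - size x).

Lemma K_estimator_nil (N : nat) (x : seq bool) (i : nat) :
  x != [::] -> K_estimator N x i [::] = 0.
Proof.
move=> x_nil; rewrite /K_estimator occurs_at_nil // big_nat_cond big1 ?subr0 //.
move=> l /andP[/andP[lt_xl _] _]; rewrite big1 // => y _.
by rewrite occurs_at_nil ?mulr0 ?mul0r // -size_eq0 size_tuple -lt0n (leq_trans _ lt_xl).
Qed.

Lemma K_estimator_consSS (N : nat) (x : seq bool) (i : nat) (b : bool) (t : seq bool) :
  K_estimator N x i.+2 (b :: t) = K_estimator N x i.+1 t.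
Proof. by rewrite /K_estimator occurs_atSS; congr (_ - _). Qed.

Lemma sum_inY_occurs1 (x u : seq bool) (l : nat) (e d : R) (F : seq bool -> R) :
  \sum_(y : l.-tuple bool | inY x y) e * (occurs_at u y 1)%:R * F y * d =
    ((size (take l u) == l) && inY x (take l u))%:R * (e * F (take l u) * d).
Proof.
rewrite -(big_tuple_eq (inY x) (fun y => e * F y * d)); apply: eq_bigr => y _.
by rewrite occurs_at1 size_tuple (mulrC e) -!mulrA.
Qed.

Lemma K_estimator_term_cons (a b : bool) (x t : seq bool) (m : nat) :
  x != [::] -> (size x < m)%N ->
  ((size (take m.+1 (b :: t)) == m.+1) && inY (a :: x) (take m.+1 (b :: t)))%:R *
    ((-1) ^+ (m.+1 - (size x).+1 + 1) * (sbinom' (take m.+1 (b :: t)) (a :: x))%:R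
      * odds p ^+ (m.+1 - (size x).+1))
  = - ((b == a)%:R * prefix_term p t x m).
Proof.
move=> x_nil lt_xm; rewrite [take _ _]/= [size _]/= eqSS subSS.
have [le_mt|lt_tm] := leqP m (size t); last first.
  by rewrite prefix_term_out // take_oversize ?(ltnW lt_tm) // ltn_eqF // !mul0r mulr0 oppr0.
have w_nil : take m t != [::] by rewrite -size_eq0 size_takel //; lia.
rewrite size_takel // eqxx /= mulrA mulrCA -natrM inY_sbinom'_cons // !natrM.
rewrite /prefix_term le_mt (exprNn (odds p)) addn1 exprS mul1r; ring.
Qed.

Lemma K_estimator_cons1 (N : nat) (a b : bool) (x t : seq bool) :
  x != [::] -> (size t < N)%N ->
  K_estimator N (a :: x) 1 (b :: t) = (b == a)%:R * prefix_estimator p t x.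
Proof.
move=> x_nil lt_tN; rewrite /K_estimator occurs_at1 [size (a :: x)]/= take_cons.
under eq_bigr => l _ do rewrite (sum_inY_occurs1 _ _ _ _ _ (fun y => (sbinom' y (a :: x))%:R)).
rewrite big_add1 (eq_big_nat _ _ (F2 := fun m => - ((b == a)%:R * prefix_term p t x m))).
  rewrite eqseq_cons -mulnb natrM sumrN opprK -mulr_sumr -mulrDr; congr (_ * _).
  rewrite (prefix_estimatorE _ _ _ N) // -(prefix_term_size p) //.
  have [lt_xN|le_Nx] := ltnP (size x) N; first by rewrite [in RHS]big_ltn.
  by rewrite prefix_term_out ?big_geq ?addr0 ?leqW //; apply: leq_trans le_Nx.
by move=> m /andP[lt_xm _]; apply: K_estimator_term_cons.
Qed.

Hypothesis q_neq0 : 1 - p != 0.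

Lemma trace_expect_K_estimator (N : nat) (x s : seq bool) (i : nat) :
  (2 <= size x)%N -> (size s <= N)%N -> (1 <= i)%N ->
  trace_expect p s (K_estimator N x i) = (1 - p) ^+ size x * Kstat p s x i.
Proof.
move=> x_ge2; elim: s i => [|b s IH] i le_sN i_gt0.
  rewrite trace_expect_nil K_estimator_nil -?size_eq0 -?lt0n ?(leq_trans _ x_ge2) //.
  by rewrite /Kstat big_geq ?mulr0.
have lt_sN : (size s < N)%N by [].
rewrite trace_expect_cons; case: i i_gt0 => [|[|i]] // _; last first.
  rewrite (eq_trace_expect p s (K_estimator_consSS N x i b)) !IH ?(ltnW lt_sN) //.
  by rewrite Kstat_consS; ring.
case: x x_ge2 IH => [|a x] // x_ge2 IH.
have x_nil : x != [::] by rewrite -size_eq0 -lt0n.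
rewrite (eq_in_trace_expect p s (f := fun t => K_estimator N (a :: x) 1 (b :: t))
  (g := fun t => (b == a)%:R * prefix_estimator p t x)); last first.
  by move=> t le_ts; apply: K_estimator_cons1 => //; apply: leq_ltn_trans lt_sN.
rewrite trace_expectMl trace_expect_prefix_estimator // IH ?(ltnW lt_sN) // Kstat_cons1.
by rewrite occurs_at1 [size _]/= take_cons eqseq_cons -mulnb natrM exprS; ring.
Qed.

End KEstimator.

Theorem lemma1 (R : realFieldType) (n : nat) (s : seq bool) (p : R)
    (k : nat) (x : seq bool) (i : nat) :
  size s = n -> 0 <= p -> p < 1 ->
  size x = k -> (2 <= k)%N ->
  (1 <= i)%N -> (i <= n - k + 1)%N ->
  Kstat p s x i =
    ((1 - p) ^+ k)^-1 *
    (Ptrace p s x i -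
     \sum_(k.+1 <= l < n.+1)
       \sum_(y : l.-tuple bool | inY x y)
         (-1) ^+ (l - k + 1) * Ptrace p s y i * (sbinom' y x)%:R
           * (p / (1 - p)) ^+ (l - k)).
Proof.
move=> <- _ lt_p1 <- x_ge2 i_gt0 _.
have q_neq0 : 1 - p != 0 by rewrite lt0r_neq0 // subr_gt0.
rewrite (_ : Ptrace p s x i - _ = trace_expect p s (K_estimator p (size s) x i)).
  by rewrite trace_expect_K_estimator // mulKf // expf_neq0.
rewrite /K_estimator trace_expectB PtraceE; congr (_ - _).
rewrite -trace_expect_sum; apply: eq_bigr => l _; rewrite -trace_expect_sum.
by apply: eq_bigr => y _; rewrite PtraceE -trace_expectMl -!trace_expectMr.
Qed.
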